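(* Let $k\ge1$, let $\Gamma=\mathbb{Z}_2\,\mathrm{wr}\,\mathbb{Z}^k=\Sigma\rtimes_\alpha\mathbb{Z}^k$ with $\Sigma=\bigoplus_{x\in\mathbb{Z}^k}(\mathbb{Z}_2)_{(x)}$, and let $\phi:\Gamma\to\Gamma$ be an automorphism, with restriction $\phi'=\phi|_\Sigma:\Sigma\to\Sigma$. Write $\phi'(\delta_0)=\delta_{x(1)}+\dots+\delta_{x(n)}$ with distinct $x(1),\dots,x(n)\in\mathbb{Z}^k$. Then $n=1$. Moreover, $\phi'$ permutes the set $\{\delta_x : x\in\mathbb{Z}^k\}$.
   Context: $\mathbb{Z}_2\,\mathrm{wr}\,\mathbb{Z}^k$ is the semidirect product $\Sigma\rtimes_\alpha\mathbb{Z}^k$, where $\Sigma=\bigoplus_{x\in\mathbb{Z}^k}(\mathbb{Z}_2)_{(x)}$ (finitely supported), each $(\mathbb{Z}_2)_{(x)}\cong\mathbb{Z}_2$ has nontrivial element $\delta_x$, and $\alpha(y)(\delta_x)=\delta_{y+x}$ for $y\in\mathbb{Z}^k$. The subgroup $\Sigma$ is the torsion subgroup of $\Gamma$, hence characteristic, so $\phi(\Sigma)=\Sigma$. *)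

From HB Require Import structures.
From mathcomp Require Import all_boot all_order all_algebra.
From mathcomp Require Import finmap.
Set Implicit Arguments. Unset Strict Implicit. Unset Printing Implicit Defensive.
Import GRing.Theory.
Local Open Scope ring_scope.
Local Open Scope fset_scope.

Definition Zk (k : nat) := 'rV[int]_k.

(* Sigma = (+)_{x in Z^k} Z_2, an element being identified with its (finite)
   support; group law = symmetric difference.  delta_x = [fset x]. *)
Definition Sigma (k : nat) := {fset Zk k}.

Definition symd (k : nat) (S T : Sigma k) : Sigma k := (S `\` T) `|` (T `\` S).

Definition alpha (k : nat) (y : Zk k) (S : Sigma k) : Sigma k :=
  [fset ((y + x)%R : Zk k) | x in S].

Definition Gamma (k : nat) := (Sigma k * Zk k)%type.

Definition gmul (k : nat) (g h : Gamma k) : Gamma k :=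
  (symd g.1 (alpha g.2 h.1), (g.2 + h.2)%R).

Definition delta (k : nat) (x : Zk k) : Gamma k := ([fset x], 0%R).

Definition is_automorphism (k : nat) (phi : Gamma k -> Gamma k) : Prop :=
  bijective phi /\ forall g h : Gamma k, phi (gmul g h) = gmul (phi g) (phi h).

From HB Require Import structures.
From mathcomp Require Import all_boot all_order all_algebra.
From mathcomp Require Import finmap.
Set Implicit Arguments. Unset Strict Implicit. Unset Printing Implicit Defensive.
Import Order.TTheory GRing.Theory Num.Theory.
Local Open Scope ring_scope.

(* Sigma is exactly the set of elements of order at most 2 of Gamma, so phi
   maps Sigma to itself, and conjugating delta_0 by (0, x) gives
   phi(delta_x) = shift(x) + Q, where Q = phi'(delta_0) and shift is an
   injective additive map of Z^k.  If S is the preimage of delta_0, the mod 2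
   sum of the translates shift(x) + Q, x in S, is therefore the single point 0.
   Take an additive G : Z^k -> Z injective on shift(S) and on Q, namely
   G(v) = sum_i v_i c^i for an integer c avoiding finitely many polynomial
   roots.  The sum of the G-maximal points of shift(S) and of Q has a unique
   representation, so it is 0; likewise for the G-minimal points.  Comparing the two sums gives
   max_Q G = min_Q G, so Q is a single point. *)

Section Sigma.
Variable k : nat.
Implicit Types (S T : Sigma k) (x y z : Zk k).

Lemma in_symd S T z : (z \in symd S T) = (z \in S) (+) (z \in T).
Proof. by rewrite /symd in_fsetU !in_fsetD; case: (z \in S); case: (z \in T). Qed.

Lemma in_alpha y S z : (z \in alpha y S) = (- y + z \in S).
Proof.
apply/imfsetP/idP => [[x /= xS ->]|h]; first by rewrite addKr.
by exists (- y + z) => //; rewrite addNKr.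
Qed.

Lemma symd0 S : symd S fset0 = S.
Proof. by apply/fsetP => z; rewrite in_symd in_fset0 addbF. Qed.

Lemma sym0d S : symd fset0 S = S.
Proof. by apply/fsetP => z; rewrite in_symd in_fset0. Qed.

Lemma symdd S : symd S S = fset0.
Proof. by apply/fsetP => z; rewrite in_symd in_fset0 addbb. Qed.

Lemma symdA S T (U : Sigma k) : symd S (symd T U) = symd (symd S T) U.
Proof. by apply/fsetP => z; rewrite !in_symd addbA. Qed.

Lemma symdC S T : symd S T = symd T S.
Proof. by apply/fsetP => z; rewrite !in_symd addbC. Qed.

Lemma symd_fset1 x S : x \notin S -> symd [fset x]%fset S = (x |` S)%fset.
Proof.
move=> xS; apply/fsetP => z; rewrite in_symd in_fset1U in_fset1.
by case: eqVneq => [->|]; rewrite ?(negbTE xS).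
Qed.

Lemma alpha0 S : alpha 0 S = S.
Proof. by apply/fsetP => z; rewrite in_alpha oppr0 add0r. Qed.

Lemma alpha_fset0 y : alpha y fset0 = fset0.
Proof. by apply/fsetP => z; rewrite in_alpha !in_fset0. Qed.

Lemma alpha_fset1 y x : alpha y [fset x]%fset = [fset (y + x)%R]%fset.
Proof.
apply/fsetP => z; rewrite in_alpha !in_fset1.
by apply/eqP/eqP => [<-|->]; rewrite ?addNKr ?addKr.
Qed.

End Sigma.

Lemma double_mx_eq0 (R : numDomainType) m n (A : 'M[R]_(m, n)) :
  A + A = 0 -> A = 0.
Proof.
move=> /matrixP AA; apply/matrixP => i j; move: (AA i j); rewrite !mxE.
by move/eqP; rewrite -mulr2n mulrn_eq0 => /eqP.
Qed.

Section Gamma.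
Variable k : nat.
Implicit Types (S T : Sigma k) (x y : Zk k) (g : Gamma k).

Definition gunit : Gamma k := (fset0, 0).

Lemma gmulE S x T y : gmul (S, x) (T, y) = (symd S (alpha x T), x + y).
Proof. by []. Qed.

Lemma gmul_idem g : gmul g g = g -> g = gunit.
Proof.
case: g => S x; rewrite gmulE => -[SS xx].
have x0 : x = 0 by apply: (addrI x); rewrite xx addr0.
by move: SS; rewrite x0 alpha0 symdd => <-.
Qed.

Lemma sigma_sqr S : gmul (S, 0) (S, 0) = gunit.
Proof. by rewrite gmulE alpha0 symdd addr0. Qed.

Lemma sqr_gunit_sigma g : gmul g g = gunit -> g.2 = 0.
Proof. by case: g => S x; rewrite gmulE => -[_ /double_mx_eq0]. Qed.

End Gamma.

Lemma exists_argmax (T : eqType) d (O : orderType d) (F : T -> O)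
    (s : seq T) x0 :
  x0 \in s -> exists2 x, x \in s & {in s, forall y, (F y <= F x)%O}.
Proof.
elim: s x0 => [//|x s IH] x0 _; case: s IH => [|y s] IH.
  by exists x; rewrite ?mem_head // => z; rewrite inE => /eqP->.
have [m ms maxm] := IH y (mem_head _ _); case: (leP (F m) (F x)) => [mx|xm].
  exists x; first exact: mem_head.
  by move=> z; rewrite inE => /predU1P[->//|/maxm/le_trans]; apply.
exists m; first by rewrite inE ms orbT.
by move=> z; rewrite inE => /predU1P[->|/maxm//]; apply: ltW.
Qed.

Section Translates.
Variables (V : zmodType) (R : realDomainType).
Implicit Types (A Q : {fset V}) (G : V -> R).

(* [odd (nreps A Q z)] says that z lies in the mod 2 sum of the translates
   x + Q, x in A. *)
Definition nreps A Q (z : V) : nat := \sum_(x <- A) ((z - x)%R \in Q).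

Lemma extremal_sum_unique G A Q xM qM x :
  {morph G : u v / u + v} -> {in A &, injective G} ->
  {in A, forall y, G y <= G xM} -> {in Q, forall q, G q <= G qM} ->
  xM \in A -> x \in A -> xM + qM - x \in Q -> x = xM.
Proof.
move=> GD Ginj maxA maxQ xMA xA qQ; apply: Ginj => //; apply/eqP.
rewrite eq_le maxA //= -(lerD2r (G qM)) -GD -[xM + qM](subrK x) GD.
by rewrite addrC lerD2l maxQ.
Qed.

Lemma nreps_extremal G A Q xM qM :
  {morph G : u v / u + v} -> {in A &, injective G} ->
  {in A, forall y, G y <= G xM} -> {in Q, forall q, G q <= G qM} ->
  xM \in A -> qM \in Q -> nreps A Q (xM + qM) = 1%N.
Proof.
move=> GD Ginj maxA maxQ xMA qMQ.
rewrite /nreps (big_fsetD1 xM) //= addrAC subrr add0r qMQ.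
rewrite big1_fset // => x /fsetD1P[xxM xA] _.
apply/eqP; rewrite eqb0; apply/negP => qQ.
by move/eqP: xxM; apply; apply: (extremal_sum_unique GD Ginj maxA maxQ).
Qed.

Lemma odd_nreps_fset1 G A Q (z0 : V) :
  {morph G : u v / u + v} -> {in A &, injective G} -> {in Q &, injective G} ->
  (forall z, odd (nreps A Q z) = (z == z0)) -> exists q, Q = [fset q]%fset.
Proof.
move=> GD GinjA GinjQ reps.
have [x0 x0A q0Q] : exists2 x0, x0 \in A & z0 - x0 \in Q.
  have : nreps A Q z0 != 0%N.
    by apply/eqP => n0; move: (reps z0); rewrite n0 eqxx.
  rewrite /nreps sum_nat_seq_eq0 => /allPn[x xA].
  by rewrite eqb0 negbK; exists x.
have max_sum G' xM qM : {morph G' : u v / u + v} -> {in A &, injective G'} ->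
    xM \in A -> {in A, forall y, G' y <= G' xM} ->
    qM \in Q -> {in Q, forall q, G' q <= G' qM} -> xM + qM = z0.
  move=> G'D G'inj xMA maxA qMQ maxQ; apply/eqP.
  by rewrite -reps (nreps_extremal G'D G'inj maxA maxQ).
have NGD : {morph (fun v => - G v) : u v / u + v}.
  by move=> u v /=; rewrite GD opprD.
have NGinj : {in A &, injective (fun v => - G v)}.
  by move=> u v uA vA /oppr_inj; apply: GinjA.
have [xM xMA maxA] := exists_argmax G x0A.
have [qM qMQ maxQ] := exists_argmax G q0Q.
have [xm xmA minA] := exists_argmax (fun v => - G v) x0A.
have [qm qmQ minQ] := exists_argmax (fun v => - G v) q0Q.
have sumE : G xM + G qM = G xm + G qm.
  by rewrite -!GD (max_sum _ _ _ GD GinjA) ?(max_sum _ _ _ NGD NGinj).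
have qMm : G qM <= G qm.
  by rewrite -(lerD2l (G xM)) sumE lerD2r -lerN2 minA.
exists qM; apply/fsetP => q; rewrite in_fset1; apply/idP/eqP => [qQ|->//].
apply: GinjQ => //; apply/eqP; rewrite eq_le maxQ //=.
by apply: le_trans qMm _; rewrite -lerN2 minQ.
Qed.

End Translates.

Lemma exists_nonroot (R : numDomainType) (p : {poly R}) :
  p != 0 -> exists c, ~~ root p c.
Proof.
move=> p0; pose cs := [seq i%:R : R | i <- iota 0 (size p)].
have : ~~ all (root p) cs.
  apply/negP => roots; suff /(max_poly_roots p0 roots) : uniq cs.
    by rewrite size_map size_iota ltnn.
  by rewrite map_inj_uniq ?iota_uniq // => m n /eqP; rewrite eqr_nat => /eqP.
by case/allPn => c _ nroot; exists c.
Qed.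

Section Separation.
Variables (R : numDomainType) (k : nat).
Implicit Types (u v : 'rV[R]_k).

Definition rpoly v : {poly R} := \sum_(i < k) v 0 i *: 'X^i.

Lemma rpolyD u v : rpoly (u + v) = rpoly u + rpoly v.
Proof. by rewrite -big_split; apply: eq_bigr => i _; rewrite mxE scalerDl. Qed.

Lemma coef_rpoly v (i : 'I_k) : (rpoly v)`_i = v 0 i.
Proof.
rewrite coef_sum (bigD1 i) //= coefZ coefXn eqxx mulr1 big1 ?addr0 // => j ji.
by rewrite coefZ coefXn eq_sym val_eqE (negbTE ji) mulr0.
Qed.

Lemma rpoly_inj : injective rpoly.
Proof.
move=> u v /polyP uv; apply/matrixP => i j.
by rewrite [i]ord1 -!coef_rpoly uv.
Qed.

Lemma exists_separating (D : seq 'rV[R]_k) :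
  exists c, {in D &, injective (fun v => (rpoly v).[c])}.
Proof.
pose P := \prod_(u <- D) \prod_(v <- D | u != v) (rpoly u - rpoly v).
have P0 : P != 0.
  rewrite prodf_seq_neq0; apply/allP => u _; rewrite prodf_seq_neq0.
  apply/allP => v _; apply/implyP => uv.
  by rewrite subr_eq0; apply: contra uv => /eqP/rpoly_inj->.
have [c Pc] := exists_nonroot P0; exists c => u v uD vD /= uvc.
apply/eqP; move: Pc; apply: contraNT => uv.
rewrite rootE horner_prod prodf_seq_eq0; apply/hasP; exists u => //=.
rewrite horner_prod prodf_seq_eq0; apply/hasP; exists v => //.
by rewrite uv hornerD hornerN uvc subrr eqxx.
Qed.

End Separation.

Section Automorphism.
Variables (k : nat) (phi : Gamma k -> Gamma k).
Hypothesis phiM : {morph phi : g h / gmul g h}.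
Hypothesis phi_inj : injective phi.
Implicit Types (S : Sigma k) (x y z : Zk k).

Lemma phi_gunit : phi (gunit k) = gunit k.
Proof. by apply: gmul_idem; rewrite -phiM /gunit gmulE alpha_fset0 symd0 addr0. Qed.

Lemma phi_sigma S : phi (S, 0) = ((phi (S, 0)).1, 0).
Proof.
have : (phi (S, 0)).2 = 0.
  by apply: sqr_gunit_sigma; rewrite -phiM sigma_sqr phi_gunit.
by case: (phi _) => T y /= ->.
Qed.

Definition shift x : Zk k := (phi (fset0, x)).2.

Definition supp0 : Sigma k := (phi (delta 0)).1.

Lemma shiftD : {morph shift : x y / x + y}.
Proof.
move=> x y; rewrite /shift -[in LHS](symd0 fset0).
by rewrite -[fset0 in symd _ fset0](alpha_fset0 x) -gmulE phiM.
Qed.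

Lemma shift_inj : injective shift.
Proof.
have shift_eq0 x : shift x = 0 -> x = 0.
  move=> sx0; have : phi (gmul (fset0, x) (fset0, x)) = phi (gunit k).
    rewrite phiM phi_gunit; case E: (phi _) => [S y].
    by move: sx0; rewrite /shift E /= => ->; rewrite sigma_sqr.
  by move/phi_inj/sqr_gunit_sigma.
move=> x y sxy; apply/eqP; rewrite -subr_eq0; apply/eqP/shift_eq0.
by apply: (addIr (shift y)); rewrite -shiftD subrK sxy add0r.
Qed.

Lemma phi_delta x : phi (delta x) = (alpha (shift x) supp0, 0).
Proof.
have -> : delta x = gmul (gmul (fset0, x) (delta 0)) (fset0, - x).
  by rewrite /delta !gmulE sym0d alpha_fset1 alpha_fset0 symd0 !addr0 subrr.
have : phi (gmul (fset0, x) (fset0, - x)) = gunit k.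
  by rewrite gmulE alpha_fset0 symd0 subrr phi_gunit.
rewrite !phiM (phi_sigma [fset 0]%fset) -/(delta 0) -/supp0 /shift.
case: (phi (fset0, x)) => S a; case: (phi (fset0, - x)) => T b /=.
rewrite !gmulE => -[ST ab] /=; rewrite addr0 ab; congr (_, _).
have -> : alpha a T = S by rewrite -[alpha a T]sym0d -ST -symdA symdd symd0.
by rewrite symdC symdA symdd sym0d.
Qed.

Lemma in_phi_sigma S z :
  (z \in (phi (S, 0)).1) = odd (nreps (shift @` S)%fset supp0 z).
Proof.
elim/fset1U_rect: S => [|x S xS IH].
  by rewrite -[(fset0, 0)]/(gunit k) phi_gunit imfset0 /nreps big_nil.
have -> : ((x |` S)%fset, 0) = gmul (delta x) (S, 0) :> Gamma k.
  by rewrite gmulE alpha0 addr0 symd_fset1.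
rewrite phiM phi_delta phi_sigma gmulE alpha0 in_symd in_alpha IH imfsetU1.
rewrite /nreps big_fsetU1 ?mem_imfset ?oddD ?oddb ?(addrC z) //.
exact: shift_inj.
Qed.

End Automorphism.

Section MainResult.
Variables (k : nat) (phi : Gamma k -> Gamma k).
Hypothesis phi_aut : is_automorphism phi.

Lemma supp0_fset1 : exists q, supp0 phi = [fset q]%fset.
Proof.
case: phi_aut => -[psi phiK psiK] phiM; have phi_inj := can_inj phiK.
pose S := (psi (delta 0)).1.
have psi_delta0 : psi (delta 0) = (S, 0).
  have : (psi (delta 0)).2 = 0.
    apply: sqr_gunit_sigma; apply: phi_inj.
    by rewrite phiM psiK phi_gunit // sigma_sqr.
  by rewrite /S; case: (psi _) => T y /= ->.
have reps z : odd (nreps (shift phi @` S)%fset (supp0 phi) z) = (z == 0).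
  by rewrite -in_phi_sigma // -psi_delta0 psiK in_fset1.
have [c sep] := exists_separating ((shift phi @` S)%fset ++ supp0 phi).
apply: (odd_nreps_fset1 (G := fun v => (rpoly v).[c])) reps.
- by move=> u v /=; rewrite rpolyD hornerD.
- by apply: sub_in2 sep => v vA; rewrite mem_cat vA.
- by apply: sub_in2 sep => v vQ; rewrite mem_cat vQ orbT.
Qed.

Lemma phi_delta_delta x : exists y, phi (delta x) = delta y.
Proof.
case: phi_aut => -[psi phiK _] phiM; have [q supp0E] := supp0_fset1.
exists (shift phi x + q).
by rewrite (phi_delta phiM) supp0E alpha_fset1.
Qed.

End MainResult.

Lemma automorphism_inv k (phi psi : Gamma k -> Gamma k) :
  is_automorphism phi -> cancel phi psi -> cancel psi phi -> is_automorphism psi.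
Proof.
move=> [_ phiM] phiK psiK; split; first by exists phi.
by move=> g h; apply: (can_inj phiK); rewrite phiM !psiK.
Qed.

Local Open Scope fset_scope.

Theorem lemma2p1 (k : nat) (hk : (0 < k)%N) (phi : Gamma k -> Gamma k)
  (hphi : is_automorphism phi) :
  (* phi'(delta_0) = delta_{x(1)} + ... + delta_{x(n)} lies in Sigma and n = 1 *)
  (exists S : Sigma k, phi (delta 0%R) = (S, 0%R) /\ #|` S| = 1%N) /\
  (* phi' permutes {delta_x : x in Z^k} *)
  (forall x : Zk k, exists y : Zk k, phi (delta x) = delta y) /\
  (forall y : Zk k, exists x : Zk k, phi (delta x) = delta y).
Proof.
(* The argument does not need [hk]. *)
have [[psi phiK psiK] phiM] := hphi.
split; [|split].
- have [q supp0E] := supp0_fset1 hphi.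
  exists (supp0 phi); split; last by rewrite supp0E cardfs1.
  exact: phi_sigma phiM [fset 0].
- exact: phi_delta_delta.
- move=> y; have psi_aut := automorphism_inv hphi phiK psiK.
  have [x psi_y] := phi_delta_delta psi_aut y.
  by exists x; rewrite -psi_y psiK.
Qed.
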